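(* Let $G$ be a graph and let $\{e_1,e_2\}$ be a $2$-edge-cut in $G$. Suppose that $\{e_1,f_1,f_2\}$ is a $3$-edge-cut in $G$. Then $\{e_2,f_1,f_2\}$ is a $3$-edge-cut in $G$ as well.
   Context: Graphs may have parallel edges but no loops. A $k$-edge-cut is an inclusion-minimal edge cut of size $k$: a set of $k$ edges whose removal increases the number of connected components of $G$, such that no proper subset has this property. *)

(* Finite multigraphs (parallel edges allowed, no loops):
   vertex type V, edge type E, each edge e has endpoints src e and tgt e. *)
From mathcomp Require Import all_boot.
Set Implicit Arguments. Unset Strict Implicit. Unset Printing Implicit Defensive.

Section EdgeCuts.
Variables (V E : finType) (src tgt : E -> V).

Definition adj_wo (S : {set E}) : rel V := fun x y =>
  [exists e, (e \notin S) &&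
     (((src e == x) && (tgt e == y)) || ((src e == y) && (tgt e == x)))].

Definition ncomp (S : {set E}) : nat :=
  #|[set [set y | connect (adj_wo S) x y] | x : V]|.

Definition is_edge_cut (S : {set E}) : Prop := ncomp set0 < ncomp S.

Definition is_k_edge_cut (k : nat) (S : {set E}) : Prop :=
  [/\ #|S| = k, is_edge_cut S & forall T : {set E}, T \proper S -> ~ is_edge_cut T].

End EdgeCuts.

From mathcomp Require Import all_boot.
Set Implicit Arguments. Unset Strict Implicit. Unset Printing Implicit Defensive.

(* A set S is an edge cut iff some edge of S has its endpoints disconnected in
   G - S, and in a minimal cut every edge of S is of this kind.  Put
   H = G - {f1, f2}: minimality of {e1, f1, f2} makes e1 a bridge of H, and
   minimality of {e1, e2} makes e2 a bridge of H - e1.  A cycle of H through e2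
   would avoid the bridge e1, so e2 is a bridge of H and {e2, f1, f2} is a cut.
   For minimality, G - {e1, f} has the components of G, so e1 lies on a cycle
   of G - f; every such cycle passes through e2, hence G - {e2, f} also has the
   components of G. *)

Section EdgeCutExchange.
Variables (V E : finType) (src tgt : E -> V).
Implicit Types (S T : {set E}) (d e : E) (x y : V).

Local Notation conn S := (connect (adj_wo src tgt S)).
Local Notation joined S e := (conn S (src e) (tgt e)).
Local Notation is_cut := (is_edge_cut src tgt).

Lemma adj_wo_sym S : symmetric (adj_wo src tgt S).
Proof.
by move=> x y; apply/existsP/existsP => -[d /andP[dS xy]]; exists d; rewrite dS orbC.
Qed.

Lemma conn_sym S : connect_sym (adj_wo src tgt S).
Proof. exact/sym_connect_sym/adj_wo_sym. Qed.

Lemma joined_notin S e : e \notin S -> joined S e.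
Proof. by move=> eS; apply/connect1/existsP; exists e; rewrite eS !eqxx. Qed.

Lemma conn_remove_joined S S' x y :
  (forall d, d \in S' -> d \notin S -> joined S' d) -> conn S x y -> conn S' x y.
Proof.
move=> joinedS'; apply: connect_sub => u v /existsP[d /andP[dS uv]].
have [dS'|dS'] := boolP (d \in S'); last first.
  by apply/connect1/existsP; exists d; rewrite dS'.
have := joinedS' d dS' dS.
by case/orP: uv => /andP[/eqP<- /eqP<-] //; rewrite conn_sym.
Qed.

Lemma conn_anti S S' x y : {subset S' <= S} -> conn S x y -> conn S' x y.
Proof. by move=> sS'S; apply: conn_remove_joined => d /sS'S ->. Qed.

Lemma conn_split S e x y : conn S x y ->
  [\/ conn (e |: S) x y,
      conn (e |: S) x (src e) /\ conn (e |: S) (tgt e) y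
    | conn (e |: S) x (tgt e) /\ conn (e |: S) (src e) y].
Proof.
set c := conn (e |: S).
pose Q := [pred z | [|| c x z, c x (src e) && c (tgt e) z | c x (tgt e) && c (src e) z]].
suff /closed_connect closedQ : closed (adj_wo src tgt S) Q.
  move=> /closedQ; rewrite !inE /c connect0 => /esym/or3P[|/andP[]|/andP[]];
  by [constructor 1 | constructor 2 | constructor 3].
apply: (intro_closed (conn_sym S)) => u v /existsP[d /andP[dS uv]].
rewrite !inE /c; have [deS|deS] := boolP (d \in e |: S); last first.
  have cuv : c u v by apply/connect1/existsP; exists d; rewrite deS.
  case/or3P=> [h|/andP[-> h]|/andP[-> h]]; by rewrite (connect_trans h cuv) ?orbT.
have /eqP de : d == e by move: deS; rewrite in_setU1 (negbTE dS) orbF.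
subst d; case/orP: uv => /andP[/eqP<- /eqP<-]; rewrite !connect0 !andbT.
- by case/or3P=> [->|/andP[->]|->]; rewrite ?orbT.
- by case/or3P=> [->|->|/andP[->]]; rewrite ?orbT.
Qed.

Lemma joined_exchange T d e : d \notin e |: T ->
  joined (d |: T) d -> ~~ joined (e |: (d |: T)) d -> joined (e |: T) e.
Proof.
move=> dT /(conn_split e)[->//|[hs ht]|[hs ht]] _;
  have lift x y := @conn_anti _ (e |: T) x y (subsetP (setUS _ (subsetUr [set d] T))).
- rewrite conn_sym in hs; rewrite conn_sym in ht.
  exact: connect_trans (lift _ _ hs) (connect_trans (joined_notin dT) (lift _ _ ht)).
- have hd : conn (e |: T) (tgt d) (src d) by rewrite conn_sym joined_notin.
  exact: connect_trans (lift _ _ ht) (connect_trans hd (lift _ _ hs)).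
Qed.

Lemma ncomp_lt S x y :
  conn set0 x y -> ~~ conn S x y -> ncomp src tgt set0 < ncomp src tgt S.
Proof.
move=> xy0 nxyS; rewrite /ncomp.
pose merge (X : {set V}) := [set z | [exists w in X, conn set0 w z]].
have merge_comp w : merge [set z | conn S w z] = [set z | conn set0 w z].
  apply/setP => z; rewrite !inE; apply/exists_inP/idP => [[v]|wz]; last first.
    by exists w; rewrite // inE connect0.
  by rewrite inE => /(conn_anti (subsetP (sub0set S))); apply: connect_trans.
have -> : [set [set z | conn set0 w z] | w : V] =
          merge @: [set [set z | conn S w z] | w : V].
  by rewrite -imset_comp; apply: eq_imset => w /=; rewrite merge_comp.
rewrite ltn_neqAle leq_imset_card andbT; apply/imset_injP => merge_inj.
have /setP/(_ y) : [set z | conn S x z] = [set z | conn S y z].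
  apply: merge_inj; rewrite ?imset_f // !merge_comp.
  by apply/setP => z; rewrite !inE (same_connect (conn_sym set0) xy0).
by rewrite !inE connect0 (negbTE nxyS).
Qed.

Lemma cut_of_not_joined S d : ~~ joined S d -> is_cut S.
Proof. by apply: ncomp_lt; rewrite joined_notin ?inE. Qed.

Lemma not_cutP S : ~ is_cut S <-> (forall x y, conn set0 x y -> conn S x y).
Proof.
split=> [ncS x y xy0 | connS]; first by apply/idPn => /(ncomp_lt xy0).
rewrite /is_edge_cut; suff -> : ncomp src tgt S = ncomp src tgt set0 by rewrite ltnn.
have same_comp x : [set y | conn S x y] = [set y | conn set0 x y].
  apply/setP => y; rewrite !inE; apply/idP/idP => [|/connS//].
  exact/conn_anti/subsetP/sub0set.
by rewrite /ncomp (eq_imset _ same_comp).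
Qed.

Lemma not_cut_sub S S' : {subset S <= S'} -> ~ is_cut S' -> ~ is_cut S.
Proof.
by move=> sSS' /not_cutP connS'; apply/not_cutP => x y /connS'; apply: conn_anti.
Qed.

Lemma cut_not_joined S d : is_cut S -> ~ is_cut (S :\ d) -> ~~ joined S d.
Proof.
move=> cutS /not_cutP connSd; apply/negP => jd.
suff : ~ is_cut S by [].
apply/not_cutP => x y /connSd; apply: conn_remove_joined => d' d'S.
by rewrite !inE d'S andbT negbK => /eqP->.
Qed.

Lemma k_cut_not_joined k S d : is_k_edge_cut src tgt k S -> d \in S -> ~~ joined S d.
Proof. by case=> _ cutS minS dS; apply: cut_not_joined (minS _ (properD1 dS)). Qed.

Lemma not_cut_exchange T d e : d \notin e |: T ->
  ~ is_cut (d |: T) -> ~~ joined (e |: (d |: T)) d -> ~ is_cut (e |: T).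
Proof.
move=> dT /not_cutP conndT nde.
have je : joined (e |: T) e.
  by apply: joined_exchange dT _ nde; apply/conndT/joined_notin; rewrite inE.
apply/not_cutP => x y /conndT; apply: conn_remove_joined => d' /setU1P[-> //|d'T].
by rewrite in_setU1 d'T orbT.
Qed.

Lemma proper_not_cut S :
  (forall a, a \in S -> ~ is_cut (S :\ a)) -> forall T, T \proper S -> ~ is_cut T.
Proof.
move=> ncSa T /properP[/subsetP sTS [a aS aT]]; apply: not_cut_sub (ncSa a aS).
by move=> d dT; rewrite !inE sTS // andbT; apply: contraNneq aT => <-.
Qed.

Lemma k_cut_exchange k T d e : d \notin T -> e \notin T ->
  is_k_edge_cut src tgt 2 [set d; e] ->
  is_k_edge_cut src tgt k (d |: T) -> is_k_edge_cut src tgt k (e |: T).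
Proof.
move=> dT eT cutDE cutDT; have [cardDT _ minDT] := cutDT.
have de : d != e by case: cutDE; rewrite cards2; case: (d != e).
have sep_d := k_cut_not_joined cutDE (set21 d e).
have sep_e := k_cut_not_joined cutDE (set22 d e).
split.
- by rewrite cardsU1 eT -cardDT cardsU1 dT.
- apply: (@cut_of_not_joined _ e); apply: contra (k_cut_not_joined cutDT (setU11 d T)).
  move/(joined_exchange _); apply; first by rewrite !inE eq_sym negb_or de.
  by apply: contra sep_e; apply: conn_anti => x; rewrite !inE => /orP[]->; rewrite ?orbT.
apply: proper_not_cut => a /setU1P[->|aT].
  by rewrite setU1K //; apply: minDT; rewrite properUr // sub1set.
have da : d != a by apply: contraNneq dT => ->.
apply: (@not_cut_sub _ (e |: (T :\ a))).
  by move=> x; rewrite !inE => /andP[-> /orP[]->]; rewrite ?orbT.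
apply: (@not_cut_exchange _ d); first by rewrite !inE negb_or de (negbTE dT) andbF.
  apply: not_cut_sub (minDT _ (properD1 (setU1r d aT))) => x; rewrite !inE.
  by case/orP=> [/eqP->|/andP[-> ->]]; rewrite ?da ?eqxx ?orbT.
by apply: contra sep_d; apply: conn_anti => x; rewrite !inE => /orP[]->; rewrite ?orbT.
Qed.

End EdgeCutExchange.

Theorem lemma4 (V E : finType) (src tgt : E -> V)
  (noloop : forall e, src e != tgt e) (e1 e2 f1 f2 : E) :
  is_k_edge_cut src tgt 2 [set e1; e2] ->
  is_k_edge_cut src tgt 3 [set e1; f1; f2] ->
  is_k_edge_cut src tgt 3 [set e2; f1; f2].
Proof.
move=> cutA; rewrite -!setUA => cutB.
have [[cardA cutA' _] [cardB _ minB]] := (cutA, cutB).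
apply: k_cut_exchange cutA cutB.
  by move: cardB; rewrite cardsU1 cards2; case: (e1 \notin _); case: (f1 != f2).
apply/negP => e2P; apply: (minB _ _ cutA').
by rewrite properEcard cardA cardB andbT setUS ?sub1set.
Qed.
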